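(* With the notation of the context, $$|S|\lesssim\min\Big(N_3^{2-\alpha}\log(2+N_1\vee N_2)\,(N_1\wedge N_2)+N_1N_2,\ \ N_1^{2-\alpha}\log(2+N_2\vee N_3)\,(N_2\wedge N_3)+N_2N_3\Big).$$
   Context: Fix $\alpha\in(1,2)$, dyadic numbers $1\le N_1,N_2,N_3\le N$, a real number $m$ and a constant $C_0>0$. Let $S$ be the set of $(k,k_1,k_2,k_3)\in\mathbb Z^4$ with $k=k_1-k_2+k_3$, $k_2\notin\{k_1,k_3\}$, $\big||k_1|^\alpha-|k_2|^\alpha+|k_3|^\alpha-|k|^\alpha-m\big|\le C_0$, $|k|\le N$ and $|k_j|\le N_j$ for $j=1,2,3$. $|A|$ is cardinality, $a\wedge b=\min(a,b)$, $a\vee b=\max(a,b)$. $A\lesssim B$ means $A\le CB$ with $C$ depending only on $\alpha$ and $C_0$. *)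

From Stdlib Require Import Reals ZArith List Lra Lia.
Import ListNotations.
Open Scope R_scope.

(* |z|^a for an integer z, with the convention 0^a = 0 (a > 0). *)
Definition apow (a : R) (z : Z) : R :=
  if Z.eq_dec z 0 then 0 else Rpower (Rabs (IZR z)) a.

Definition zrange (M : Z) : list Z :=
  map (fun n => (Z.of_nat n - M)%Z) (seq 0 (Z.to_nat (2 * M + 1))).

Definition inS (a m C0 : R) (N N1 N2 N3 : Z) (q : Z * Z * Z * Z) : bool :=
  let '(k, k1, k2, k3) := q in
  (Z.eqb k (k1 - k2 + k3)%Z)
  && negb (Z.eqb k2 k1) && negb (Z.eqb k2 k3)
  && (if Rle_dec (Rabs (apow a k1 - apow a k2 + apow a k3 - apow a k - m)) C0
      then true else false)
  && Z.leb (Z.abs k) N && Z.leb (Z.abs k1) N1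
  && Z.leb (Z.abs k2) N2 && Z.leb (Z.abs k3) N3.

Definition box (N N1 N2 N3 : Z) : list (Z * Z * Z * Z) :=
  flat_map (fun k => flat_map (fun k1 => flat_map (fun k2 =>
    map (fun k3 => (k, k1, k2, k3)) (zrange N3)) (zrange N2)) (zrange N1))
    (zrange N).

(* |S|: every element of S lies in the box, and the box list has no
   duplicates, so this is the cardinality of S. *)
Definition cardS (a m C0 : R) (N N1 N2 N3 : Z) : nat :=
  length (filter (inS a m C0 N N1 N2 N3) (box N N1 N2 N3)).

From Stdlib Require Import Reals ZArith List Lra Lia Bool.
Import ListNotations.
Open Scope R_scope.

(* For k1 <> k2 put h = k1 - k2 and G_h(u) = |u|^a - |u + h|^a.  Since
   k = k1 - k2 + k3, the resonance condition of S says that G_h(k3) lies within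
   C0 of a number depending only on (k1, k2).  The map z |-> |z|^a has second
   differences at least c(a) (M + 2)^(a-2) on [-M, M] (mean value theorem away
   from the origin, direct computation near it), so G_h is monotone with slope at
   least |h| c(a) (M + |h| + 2)^(a-2).  Hence the admissible k3 form a cluster of
   at most K0 + K1 N3^(2-a) / |h| integers.  Summing over (k1, k2) and using the
   harmonic bound sum_{0 < |z| <= R} 1/|z| <= 2 (1 + ln R), the sum of 1/|k1 - k2|
   over the grid costs a logarithm per point of its shorter side, which gives the
   first term of the minimum.  The defining conditions of S are symmetric in
   k1 and k3, so grouping by (k3, k2) instead gives the second term. *)

Definition sumR {A} (f : A -> R) (l : list A) : R :=
  fold_right (fun x acc => f x + acc) 0 l.

Lemma sumR_app {A} (f : A -> R) l1 l2 : sumR f (l1 ++ l2) = sumR f l1 + sumR f l2.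
Proof. induction l1 as [|x l1 IH]; simpl; [lra | rewrite IH; lra]. Qed.

Lemma sumR_le {A} (f g : A -> R) l :
  (forall x, In x l -> f x <= g x) -> sumR f l <= sumR g l.
Proof.
  induction l as [|x l IH]; simpl; intros H; [lra|].
  pose proof (H x (or_introl eq_refl)).
  pose proof (IH (fun y Hy => H y (or_intror Hy))). lra.
Qed.

Lemma sumR_nonneg {A} (f : A -> R) l : (forall x, 0 <= f x) -> 0 <= sumR f l.
Proof. intros H; induction l as [|x l IH]; simpl; [lra|]. specialize (H x); lra. Qed.

Lemma sumR_plus {A} (f g : A -> R) l :
  sumR (fun x => f x + g x) l = sumR f l + sumR g l.
Proof. induction l as [|x l IH]; simpl; [lra | rewrite IH; lra]. Qed.

Lemma sumR_scal {A} (c : R) (f : A -> R) l :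
  sumR (fun x => c * f x) l = c * sumR f l.
Proof. induction l as [|x l IH]; simpl; [lra | rewrite IH; lra]. Qed.

Lemma sumR_const {A} (c : R) (l : list A) : sumR (fun _ => c) l = c * INR (length l).
Proof.
  induction l as [|x l IH]; simpl length; [simpl; lra|].
  rewrite S_INR. simpl. rewrite IH. lra.
Qed.

Lemma sumR_map {A B} (f : B -> R) (g : A -> B) l :
  sumR f (map g l) = sumR (fun x => f (g x)) l.
Proof. induction l as [|x l IH]; simpl; [lra | rewrite IH; lra]. Qed.

Lemma sumR_ext {A} (f g : A -> R) l : (forall x, f x = g x) -> sumR f l = sumR g l.
Proof. intros H; induction l as [|x l IH]; simpl; [lra | rewrite H, IH; lra]. Qed.

Lemma sumR_swap {A B} (F : A -> B -> R) l1 l2 :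
  sumR (fun x => sumR (F x) l2) l1 = sumR (fun y => sumR (fun x => F x y) l1) l2.
Proof.
  induction l1 as [|x l1 IH]; simpl.
  - induction l2; simpl; lra.
  - rewrite IH, <- sumR_plus. reflexivity.
Qed.

Lemma sumR_incl {A} (f : A -> R) l1 l2 :
  NoDup l1 -> incl l1 l2 -> (forall x, 0 <= f x) -> sumR f l1 <= sumR f l2.
Proof.
  intros Hnd; revert l2; induction Hnd as [|x l1 Hx Hnd IH]; intros l2 Hincl Hf.
  - simpl. apply sumR_nonneg; auto.
  - destruct (in_split x l2 (Hincl x (or_introl eq_refl))) as [l2a [l2b ->]].
    assert (Hrest : sumR f l1 <= sumR f (l2a ++ l2b)).
    { apply IH; auto. intros y Hy.
      destruct (in_app_or _ _ _ (Hincl y (or_intror Hy))) as [H|[H|H]];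
        apply in_or_app; auto. subst; contradiction. }
    rewrite sumR_app in Hrest |- *. simpl. lra.
Qed.

Lemma length_flat_map_INR {A B} (f : A -> list B) l :
  INR (length (flat_map f l)) = sumR (fun x => INR (length (f x))) l.
Proof.
  induction l as [|x l IH]; simpl; [reflexivity|].
  rewrite length_app, plus_INR, IH. reflexivity.
Qed.

Lemma NoDup_map_inj {A B} (f : A -> B) l :
  (forall x y, f x = f y -> x = y) -> NoDup l -> NoDup (map f l).
Proof.
  intros Hinj Hnd; induction Hnd as [|x l Hx Hnd IH]; simpl; constructor; auto.
  intros Hin. apply in_map_iff in Hin. destruct Hin as [y [Hy Hyl]].
  apply Hinj in Hy; subst; contradiction.
Qed.

Lemma NoDup_flat_map_keyed {A B} (key : B -> A) (f : A -> list B) l :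
  NoDup l -> (forall x, NoDup (f x)) -> (forall x z, In z (f x) -> key z = x) ->
  NoDup (flat_map f l).
Proof.
  intros Hnd Hf Hkey; induction Hnd as [|x l Hx Hnd IH]; simpl; [constructor|].
  apply NoDup_app; auto.
  intros z Hz Hz'. apply in_flat_map in Hz'. destruct Hz' as [y [Hy Hzy]].
  rewrite <- (Hkey x z Hz), (Hkey y z Hzy) in Hx. contradiction.
Qed.

Lemma In_zrange M z : In z (zrange M) <-> (-M <= z <= M)%Z.
Proof.
  unfold zrange. rewrite in_map_iff. split.
  - intros [n [<- Hn]]. apply in_seq in Hn. lia.
  - intros Hz. exists (Z.to_nat (z + M)). split; [lia|].
    apply in_seq. lia.
Qed.

Lemma NoDup_zrange M : NoDup (zrange M).
Proof. apply NoDup_map_inj; [intros; lia | apply seq_NoDup]. Qed.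

Lemma length_zrange M : (0 <= M)%Z -> INR (length (zrange M)) = IZR (2 * M + 1).
Proof.
  intros HM. unfold zrange. rewrite length_map, length_seq, INR_IZR_INZ.
  f_equal. lia.
Qed.

Lemma NoDup_box N N1 N2 N3 : NoDup (box N N1 N2 N3).
Proof.
  apply (NoDup_flat_map_keyed (fun '(k, _, _, _) => k)); [apply NoDup_zrange| |].
  2: { intros k q Hq. repeat (apply in_flat_map in Hq; destruct Hq as [? [_ Hq]]).
       apply in_map_iff in Hq. destruct Hq as [? [<- _]]. reflexivity. }
  intros k. apply (NoDup_flat_map_keyed (fun '(_, k1, _, _) => k1)); [apply NoDup_zrange| |].
  2: { intros k1 q Hq. repeat (apply in_flat_map in Hq; destruct Hq as [? [_ Hq]]).
       apply in_map_iff in Hq. destruct Hq as [? [<- _]]. reflexivity. }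
  intros k1. apply (NoDup_flat_map_keyed (fun '(_, _, k2, _) => k2)); [apply NoDup_zrange| |].
  2: { intros k2 q Hq. apply in_map_iff in Hq. destruct Hq as [? [<- _]]. reflexivity. }
  intros k2. apply NoDup_map_inj; [intros x y E; injection E; auto | apply NoDup_zrange].
Qed.
Lemma Rpower_pos x y : 0 < Rpower x y.
Proof. apply exp_pos. Qed.

Lemma Rpower_base_1 y : Rpower 1 y = 1.
Proof. unfold Rpower. rewrite ln_1, Rmult_0_r, exp_0. reflexivity. Qed.

Lemma Rpower_opp_antimono x y b : 0 < x -> x <= y -> 0 <= b ->
  Rpower y (- b) <= Rpower x (- b).
Proof.
  intros Hx Hxy Hb. rewrite !Rpower_Ropp.
  apply Rinv_le_contravar; [apply Rpower_pos | apply Rle_Rpower_l; lra].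
Qed.

Lemma apow_opp a z : apow a (- z) = apow a z.
Proof.
  unfold apow. destruct (Z.eq_dec (- z) 0), (Z.eq_dec z 0); try lia; auto.
  rewrite opp_IZR, Rabs_Ropp. reflexivity.
Qed.

Lemma apow_pos a z : (0 < z)%Z -> apow a z = Rpower (IZR z) a.
Proof.
  intros Hz. unfold apow. destruct (Z.eq_dec z 0); [lia|].
  rewrite Rabs_right; auto. apply Rle_ge, IZR_le; lia.
Qed.

Lemma derivable_pt_lim_shift1 (g : R -> R) t l : derivable_pt_lim g (t + 1) l ->
  derivable_pt_lim (fun x => g (x + 1)) t l.
Proof.
  intros Hg. replace l with (l * 1) by ring.
  apply (derivable_pt_lim_comp (fun x => x + 1) g); auto.
  pose proof (derivable_pt_lim_plus id (fct_cte 1) t 1 0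
    (derivable_pt_lim_id t) (derivable_pt_lim_const 1 t)) as H.
  rewrite Rplus_0_r in H. exact H.
Qed.

(* Strict convexity of s |-> s^a on [1, oo): the second difference with unit step
   is at least a(a-1)(s+2)^(a-2), by the mean value theorem applied twice. *)
Lemma second_diff_Rpower (a s : R) : 1 < a < 2 -> 1 <= s ->
  a * (a - 1) * Rpower (s + 2) (a - 2)
  <= Rpower (s + 2) a - 2 * Rpower (s + 1) a + Rpower s a.
Proof.
  intros Ha Hs.
  destruct (MVT_cor2 (fun t => Rpower (t + 1) a - Rpower t a)
      (fun t => a * Rpower (t + 1) (a - 1) - a * Rpower t (a - 1)) s (s + 1))
    as [xi [Hxi Hxir]]; [lra| |].
  { intros c Hc.
    apply (derivable_pt_lim_minus (fun t => Rpower (t + 1) a) (fun t => Rpower t a)).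
    - apply (derivable_pt_lim_shift1 (fun t => Rpower t a)), derivable_pt_lim_power; lra.
    - apply derivable_pt_lim_power; lra. }
  destruct (MVT_cor2 (fun t => Rpower t (a - 1)) (fun t => (a - 1) * Rpower t (a - 1 - 1))
      xi (xi + 1)) as [eta [Heta Hetar]]; [lra| |].
  { intros c Hc. apply derivable_pt_lim_power; lra. }
  replace (s + 1 + 1) with (s + 2) in Hxi by ring.
  replace (a - 1 - 1) with (a - 2) in Heta by ring.
  assert (Hdecay : Rpower (s + 2) (a - 2) <= Rpower eta (a - 2)).
  { replace (a - 2) with (- (2 - a)) by ring. apply Rpower_opp_antimono; lra. }
  assert (Ha1 : 0 < a * (a - 1)) by nra.
  assert (Hsplit : Rpower (s + 2) a - 2 * Rpower (s + 1) a + Rpower s a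
                   = a * (a - 1) * Rpower eta (a - 2)).
  { replace (Rpower (s + 2) a - 2 * Rpower (s + 1) a + Rpower s a)
      with (Rpower (s + 2) a - Rpower (s + 1) a - (Rpower (s + 1) a - Rpower s a)) by ring.
    rewrite Hxi.
    replace (a * Rpower (xi + 1) (a - 1) - a * Rpower xi (a - 1))
      with (a * (Rpower (xi + 1) (a - 1) - Rpower xi (a - 1))) by ring.
    rewrite Heta. ring. }
  rewrite Hsplit. apply Rmult_le_compat_l; lra.
Qed.

Definition second_diff (a : R) (s : Z) : R :=
  apow a (s + 2) - 2 * apow a (s + 1) + apow a s.

(* A uniform positive lower bound for the second differences near the origin,
   where |z|^a is not given by a single power function. *)
Definition convexity_const (a : R) : R := Rmin (a * (a - 1)) (Rpower 2 a - 2).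

Definition slope (a : R) (M : Z) : R := convexity_const a * Rpower (IZR M + 2) (a - 2).

Lemma convexity_const_pos a : 1 < a -> 0 < convexity_const a.
Proof.
  intros Ha. apply Rmin_glb_lt; [nra|].
  pose proof (Rpower_lt 2 1 a ltac:(lra) Ha). rewrite Rpower_1 in H by lra. lra.
Qed.

Lemma slope_pos a M : 1 < a -> 0 < slope a M.
Proof. intros Ha. apply Rmult_lt_0_compat; [apply convexity_const_pos | apply Rpower_pos]; auto. Qed.

Lemma weight_antimono a t M : a < 2 -> (1 <= t <= M)%Z ->
  Rpower (IZR M + 2) (a - 2) <= Rpower (IZR t + 2) (a - 2).
Proof.
  intros Ha Ht. replace (a - 2) with (- (2 - a)) by ring.
  assert (1 <= IZR t) by (apply IZR_le; lia).
  assert (IZR t <= IZR M) by (apply IZR_le; lia).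
  apply Rpower_opp_antimono; lra.
Qed.

(* slope a M <= c(a), which handles the second differences at the origin. *)
Lemma slope_le_const a M : 1 < a < 2 -> (0 <= M)%Z -> slope a M <= convexity_const a.
Proof.
  intros Ha HM. unfold slope.
  assert (Hw : Rpower (IZR M + 2) (a - 2) <= 1).
  { rewrite <- (Rpower_base_1 (a - 2)). replace (a - 2) with (- (2 - a)) by ring.
    apply IZR_le in HM. apply Rpower_opp_antimono; lra. }
  pose proof (convexity_const_pos a (proj1 Ha)).
  rewrite <- (Rmult_1_r (convexity_const a)) at 2. apply Rmult_le_compat_l; lra.
Qed.

(* |z|^a is even, so its second differences are symmetric about -1. *)
Lemma second_diff_reflect a s : second_diff a s = second_diff a (- s - 2).
Proof.
  unfold second_diff.
  assert (E : forall u v, (u = - v)%Z -> apow a u = apow a v)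
    by (intros u v ->; apply apow_opp).
  rewrite (E (s + 2)%Z (- s - 2)%Z), (E (s + 1)%Z (- s - 2 + 1)%Z), (E s (- s - 2 + 2)%Z) by ring.
  ring.
Qed.

(* Uniform convexity: every second difference on [-M, M] is at least slope a M;
   for s >= 1 by the real estimate, for s <= -3 by reflection, and at
   s = 0, -1, -2 by computation. *)
Lemma second_diff_lower a M s : 1 < a < 2 -> (0 <= M)%Z -> (-M <= s <= M)%Z ->
  slope a M <= second_diff a s.
Proof.
  intros Ha HM Hs.
  assert (Hpos : forall t, (1 <= t <= M)%Z -> slope a M <= second_diff a t).
  { intros t Ht. unfold second_diff, slope.
    rewrite !apow_pos, !plus_IZR by lia.
    eapply Rle_trans; [|apply second_diff_Rpower; [lra | apply IZR_le; lia]].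
    apply Rmult_le_compat; [apply Rlt_le, convexity_const_pos; lra | apply Rlt_le, Rpower_pos
                           | apply Rmin_l | apply weight_antimono; [lra | lia]]. }
  destruct (Z_le_gt_dec 1 s) as [Hs1|Hs1]; [apply Hpos; lia|].
  destruct (Z_le_gt_dec s (-3)) as [Hs3|Hs3].
  { rewrite second_diff_reflect. apply Hpos. lia. }
  eapply Rle_trans; [apply slope_le_const; auto|].
  assert (H1 : apow a 1 = 1) by (rewrite apow_pos by lia; apply Rpower_base_1).
  assert (H2 : apow a 2 = Rpower 2 a) by (apply apow_pos; lia).
  assert (Hm1 : apow a (-1) = 1) by (rewrite <- H1; apply (apow_opp a 1)).
  assert (Hm2 : apow a (-2) = Rpower 2 a) by (rewrite <- H2; apply (apow_opp a 2)).
  assert (H0 : apow a 0 = 0) by reflexivity.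
  pose proof (Rmin_l (a * (a - 1)) (Rpower 2 a - 2)).
  pose proof (Rmin_r (a * (a - 1)) (Rpower 2 a - 2)).
  unfold convexity_const, second_diff.
  assert (Hs' : (s = 0 \/ s = -1 \/ s = -2)%Z) by lia.
  destruct Hs' as [Hs'|[Hs'|Hs']]; subst s; simpl; rewrite ?H0, ?H1, ?H2, ?Hm1, ?Hm2; nra.
Qed.

Lemma telescope_lower (f : Z -> R) (c : R) (lo hi : Z) :
  (forall t, (lo <= t < hi)%Z -> c <= f (t + 1)%Z - f t) ->
  forall n t, (0 <= n)%Z -> (lo <= t)%Z -> (t + n <= hi)%Z ->
  IZR n * c <= f (t + n)%Z - f t.
Proof.
  intros Hinc n t Hn. revert t. pattern n. apply natlike_ind; auto.
  - intros t _ _. rewrite Z.add_0_r. lra.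
  - intros k Hk IH t Hlo Hhi.
    pose proof (IH t Hlo ltac:(lia)).
    pose proof (Hinc (t + k)%Z ltac:(lia)).
    rewrite succ_IZR. replace (t + Z.succ k)%Z with (t + k + 1)%Z by ring. lra.
Qed.

Definition first_diff (a : R) (t : Z) : R := apow a (t + 1) - apow a t.

(* The phase difference G_h(u) = |u|^a - |u + h|^a; for fixed k1, k2 the
   resonance condition of S constrains G_(k1 - k2)(k3). *)
Definition gap_fun (a : R) (h u : Z) : R := apow a u - apow a (u + h).

Lemma first_diff_growth a M h t : 1 < a < 2 -> (0 <= M)%Z -> (0 <= h)%Z ->
  (-M <= t)%Z -> (t + h <= M + 1)%Z ->
  IZR h * slope a M <= first_diff a (t + h) - first_diff a t.
Proof.
  intros Ha HM Hh Hlo Hhi.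
  apply (telescope_lower (first_diff a) _ (- M) (M + 1)); auto.
  intros s Hs. unfold first_diff.
  replace (s + 1 + 1)%Z with (s + 2)%Z by ring.
  pose proof (second_diff_lower a M s Ha HM ltac:(lia)). unfold second_diff in *. lra.
Qed.

Lemma gap_fun_decrease a M h n u : 1 < a < 2 -> (0 <= M)%Z -> (0 <= h)%Z -> (0 <= n)%Z ->
  (-M <= u)%Z -> (u + n + h <= M + 2)%Z ->
  IZR n * (IZR h * slope a M) <= gap_fun a h u - gap_fun a h (u + n).
Proof.
  intros Ha HM Hh Hn Hlo Hhi.
  assert (Hdec := telescope_lower (fun t => - gap_fun a h t) (IZR h * slope a M)
                    (- M) (M + 2 - h)).
  enough (IZR n * (IZR h * slope a M) <= - gap_fun a h (u + n) - - gap_fun a h u) by lra.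
  apply Hdec; auto; [|lia].
  intros t Ht. pose proof (first_diff_growth a M h t Ha HM Hh ltac:(lia) ltac:(lia)).
  unfold first_diff, gap_fun in *.
  replace (t + 1 + h)%Z with (t + h + 1)%Z by ring. lra.
Qed.

(* Evenness of |z|^a reduces negative shifts h to positive ones. *)
Lemma gap_fun_reflect a h u : gap_fun a h u = gap_fun a (- h) (- u).
Proof.
  unfold gap_fun. rewrite <- (apow_opp a u), <- (apow_opp a (u + h)).
  replace (- (u + h))%Z with (- u + - h)%Z by ring. reflexivity.
Qed.

(* Separation: G_h moves by at least |x - y| |h| slope a (M + |h|) between any two
   points of [-M, M], so nearly equal values of G_h force nearby arguments. *)
Lemma gap_fun_separation a M h x y : 1 < a < 2 -> (0 <= M)%Z -> h <> 0%Z ->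
  (-M <= x <= M)%Z -> (-M <= y <= M)%Z ->
  IZR (Z.abs (x - y)) * (IZR (Z.abs h) * slope a (M + Z.abs h))
  <= Rabs (gap_fun a h x - gap_fun a h y).
Proof.
  intros Ha HM Hh.
  assert (Hpos : forall h x y, (0 < h)%Z -> (-M <= x <= M)%Z -> (-M <= y <= M)%Z ->
            IZR (Z.abs (x - y)) * (IZR h * slope a (M + h))
            <= Rabs (gap_fun a h x - gap_fun a h y)).
  { clear h x y Hh. intros h.
    assert (Hord : forall x y, (0 < h)%Z -> (-M <= x <= y)%Z -> (y <= M)%Z ->
              IZR (Z.abs (x - y)) * (IZR h * slope a (M + h))
              <= Rabs (gap_fun a h x - gap_fun a h y)).
    { intros x y Hh Hxy Hy.
      pose proof (gap_fun_decrease a (M + h) h (y - x) x Ha ltac:(lia) ltac:(lia)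
                    ltac:(lia) ltac:(lia) ltac:(lia)) as Hdec.
      replace (x + (y - x))%Z with y in Hdec by ring.
      rewrite Z.abs_neq by lia. replace (- (x - y))%Z with (y - x)%Z by ring.
      eapply Rle_trans; [exact Hdec | apply Rle_abs]. }
    intros x y Hh Hx Hy. destruct (Z_le_gt_dec x y).
    - apply Hord; lia.
    - rewrite <- Z.abs_opp, Rabs_minus_sym. replace (- (x - y))%Z with (y - x)%Z by ring.
      apply Hord; lia. }
  intros Hx Hy. destruct (Z_lt_le_dec 0 h).
  - rewrite (Z.abs_eq h) by lia. apply Hpos; lia.
  - rewrite (Z.abs_neq h) by lia. rewrite (gap_fun_reflect a h x), (gap_fun_reflect a h y).
    replace (x - y)%Z with (- (- x - - y))%Z by ring. rewrite Z.abs_opp.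
    apply Hpos; lia.
Qed.

Definition resonant (a m C0 : R) (A B x : Z) : bool :=
  if Rle_dec (Rabs (apow a A - apow a B + apow a x - apow a (A - B + x) - m)) C0
  then true else false.

(* Two resonant x share the same constant apow A - apow B - m, so their values
   of G_(A - B) differ by at most 2 C0. *)
Lemma resonant_gap a m C0 A B x y :
  resonant a m C0 A B x = true -> resonant a m C0 A B y = true ->
  Rabs (gap_fun a (A - B) x - gap_fun a (A - B) y) <= 2 * C0.
Proof.
  unfold resonant, gap_fun.
  destruct Rle_dec as [Hx|]; [|discriminate]. destruct Rle_dec as [Hy|]; [|discriminate].
  intros _ _.
  replace (x + (A - B))%Z with (A - B + x)%Z by ring.
  replace (y + (A - B))%Z with (A - B + y)%Z by ring.
  revert Hx Hy. unfold Rabs. repeat destruct Rcase_abs; lra.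
Qed.

Lemma cluster_length (F : list Z) x0 r : NoDup F -> 0 <= r ->
  (forall y, In y F -> IZR (Z.abs (y - x0)) <= r) -> INR (length F) <= 2 * r + 1.
Proof.
  intros Hnd Hr Hclose. destruct (archimed r) as [Hup1 Hup2].
  assert (Hup0 : (0 < up r)%Z) by (apply lt_IZR; lra).
  assert (Hincl : incl F (map (Z.add x0) (zrange (up r - 1)))).
  { intros y Hy. apply in_map_iff. exists (y - x0)%Z. split; [ring|].
    apply In_zrange. pose proof (Hclose y Hy) as Hyr.
    assert (Z.abs (y - x0) < up r)%Z by (apply lt_IZR; lra). lia. }
  pose proof (NoDup_incl_length Hnd Hincl) as Hlen. rewrite length_map in Hlen.
  apply le_INR in Hlen. rewrite length_zrange in Hlen by lia.
  rewrite plus_IZR, mult_IZR, minus_IZR in Hlen. lra.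
Qed.

Lemma resonant_count a m C0 M A B : 1 < a < 2 -> 0 < C0 -> (0 <= M)%Z -> A <> B ->
  INR (length (filter (resonant a m C0 A B) (zrange M)))
  <= 4 * C0 / (IZR (Z.abs (A - B)) * slope a (M + Z.abs (A - B))) + 1.
Proof.
  intros Ha HC HM HAB.
  set (w := IZR (Z.abs (A - B)) * slope a (M + Z.abs (A - B))).
  assert (Hw : 0 < w).
  { apply Rmult_lt_0_compat; [apply IZR_lt; lia | apply slope_pos; lra]. }
  replace (4 * C0 / w) with (2 * (2 * C0 / w)) by (field; lra).
  assert (Hr : 0 <= 2 * C0 / w) by (apply Rlt_le, Rdiv_lt_0_compat; lra).
  set (F := filter (resonant a m C0 A B) (zrange M)).
  destruct F as [|x0 F'] eqn:EF; [simpl; lra|]. rewrite <- EF.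
  assert (Hmem : forall y, In y F -> (-M <= y <= M)%Z /\ resonant a m C0 A B y = true).
  { intros y Hy. apply filter_In in Hy as [Hy Hres]. split; [apply In_zrange|]; auto. }
  destruct (Hmem x0) as [Hx0 Hres0]; [rewrite EF; left; auto|].
  apply (cluster_length F x0); [apply NoDup_filter, NoDup_zrange | exact Hr|].
  intros y Hy. destruct (Hmem y Hy) as [Hy0 Hres].
  pose proof (gap_fun_separation a M (A - B) y x0 Ha HM ltac:(lia) Hy0 Hx0) as Hsep.
  pose proof (resonant_gap a m C0 A B y x0 Hres Hres0) as Hgap.
  apply (Rmult_le_reg_r w); auto. unfold Rdiv. rewrite Rmult_assoc, Rinv_l by lra.
  fold w in Hsep. lra.
Qed.

(* (M + H + 2)^(2-a) is at most 6 M^(2-a) + 2 H: the base is either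
   comparable to M or to H. *)
Lemma Rpower_sum_split M H th : 1 <= M -> 1 <= H -> 0 <= th <= 1 ->
  Rpower (M + H + 2) th <= 6 * Rpower M th + 2 * H.
Proof.
  intros HM HH Hth.
  assert (Hsub : forall x, 1 <= x -> Rpower x th <= x).
  { intros x Hx. rewrite <- (Rpower_1 x) at 2 by lra. apply Rle_Rpower; lra. }
  pose proof (Rpower_pos M th). pose proof (Rpower_pos H th).
  destruct (Rle_dec H (3 * M)).
  - assert (Rpower (M + H + 2) th <= Rpower (6 * M) th) by (apply Rle_Rpower_l; lra).
    rewrite <- Rpower_mult_distr in H2 by lra.
    pose proof (Hsub 6 ltac:(lra)). nra.
  - assert (Rpower (M + H + 2) th <= Rpower (2 * H) th) by (apply Rle_Rpower_l; lra).
    rewrite <- Rpower_mult_distr in H2 by lra.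
    pose proof (Hsub 2 ltac:(lra)). pose proof (Hsub H HH). pose proof (Rpower_pos 2 th). nra.
Qed.

Definition K0 (a C0 : R) : R := 1 + 8 * C0 / convexity_const a.
Definition K1 (a C0 : R) : R := 24 * C0 / convexity_const a.

Lemma K0_nonneg a C0 : 1 < a -> 0 < C0 -> 0 <= K0 a C0.
Proof.
  intros Ha HC. pose proof (convexity_const_pos a Ha).
  assert (0 <= 8 * C0 / convexity_const a) by (apply Rlt_le, Rdiv_lt_0_compat; lra).
  unfold K0. lra.
Qed.

Lemma K1_nonneg a C0 : 1 < a -> 0 < C0 -> 0 <= K1 a C0.
Proof.
  intros Ha HC. pose proof (convexity_const_pos a Ha).
  apply Rlt_le, Rdiv_lt_0_compat; lra.
Qed.

Definition inv_abs (z : Z) : R := if Z.eq_dec z 0 then 0 else / IZR (Z.abs z).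

Lemma inv_abs_nonneg z : 0 <= inv_abs z.
Proof.
  unfold inv_abs. destruct Z.eq_dec; [lra|].
  apply Rlt_le, Rinv_0_lt_compat, IZR_lt. lia.
Qed.

Lemma fibre_bound a m C0 M A B : 1 < a < 2 -> 0 < C0 -> (1 <= M)%Z -> A <> B ->
  INR (length (filter (resonant a m C0 A B) (zrange M)))
  <= K0 a C0 + K1 a C0 * Rpower (IZR M) (2 - a) * inv_abs (A - B).
Proof.
  intros Ha HC HM HAB. eapply Rle_trans; [apply resonant_count; auto; lia|].
  unfold inv_abs. destruct Z.eq_dec; [lia|].
  pose proof (convexity_const_pos a (proj1 Ha)) as Hcc.
  set (H := IZR (Z.abs (A - B))). set (Mr := IZR M).
  assert (HH : 1 <= H) by (apply IZR_le; lia).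
  assert (HMr : 1 <= Mr) by (apply IZR_le; lia).
  pose proof (Rpower_sum_split Mr H (2 - a) HMr HH ltac:(lra)) as Hsplit.
  unfold slope. rewrite plus_IZR. fold H Mr.
  replace (a - 2) with (- (2 - a)) by ring. rewrite Rpower_Ropp.
  pose proof (Rpower_pos (Mr + H + 2) (2 - a)). pose proof (Rpower_pos Mr (2 - a)).
  unfold K0, K1.
  replace (4 * C0 / (H * (convexity_const a * / Rpower (Mr + H + 2) (2 - a))) + 1)
    with (1 + 4 * C0 / convexity_const a * Rpower (Mr + H + 2) (2 - a) / H)
    by (field; lra).
  replace (1 + 8 * C0 / convexity_const a +
           24 * C0 / convexity_const a * Rpower Mr (2 - a) * / H)
    with (1 + 4 * C0 / convexity_const a * (6 * Rpower Mr (2 - a) + 2 * H) / H)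
    by (field; lra).
  apply Rplus_le_compat_l. unfold Rdiv.
  apply Rmult_le_compat_r; [apply Rlt_le, Rinv_0_lt_compat; lra|].
  apply Rmult_le_compat_l; [|exact Hsplit].
  apply Rlt_le, Rmult_lt_0_compat; [lra | apply Rinv_0_lt_compat; lra].
Qed.

Definition fibres (a m C0 : R) (NA NB NX : Z) : list (Z * Z * Z) :=
  flat_map (fun A => flat_map (fun B =>
    if Z.eq_dec A B then []
    else map (fun x => (A, B, x)) (filter (resonant a m C0 A B) (zrange NX)))
    (zrange NB)) (zrange NA).

Lemma In_fibres a m C0 NA NB NX A B x :
  (-NA <= A <= NA)%Z -> (-NB <= B <= NB)%Z -> A <> B -> (-NX <= x <= NX)%Z ->
  resonant a m C0 A B x = true -> In (A, B, x) (fibres a m C0 NA NB NX).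
Proof.
  intros HA HB HAB Hx Hres. apply in_flat_map. exists A. split; [apply In_zrange; auto|].
  apply in_flat_map. exists B. split; [apply In_zrange; auto|].
  destruct (Z.eq_dec A B); [contradiction|].
  apply in_map_iff. exists x. split; [reflexivity|]. apply filter_In.
  split; [apply In_zrange|]; auto.
Qed.

Lemma fibres_length a m C0 NA NB NX : 1 < a < 2 -> 0 < C0 -> (1 <= NX)%Z ->
  INR (length (fibres a m C0 NA NB NX))
  <= sumR (fun A => sumR (fun B =>
       K0 a C0 + K1 a C0 * Rpower (IZR NX) (2 - a) * inv_abs (A - B)) (zrange NB)) (zrange NA).
Proof.
  intros Ha HC HNX. unfold fibres.
  rewrite length_flat_map_INR. apply sumR_le. intros A _.
  rewrite length_flat_map_INR. apply sumR_le. intros B _.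
  destruct (Z.eq_dec A B) as [->|HAB].
  - simpl. pose proof (K0_nonneg a C0 (proj1 Ha) HC).
    unfold inv_abs. rewrite Z.sub_diag. simpl. lra.
  - rewrite length_map. apply fibre_bound; auto.
Qed.

Lemma inS_spec a m C0 N N1 N2 N3 k k1 k2 k3 :
  inS a m C0 N N1 N2 N3 (k, k1, k2, k3) = true ->
  k = (k1 - k2 + k3)%Z /\ k2 <> k1 /\ k2 <> k3 /\
  Rabs (apow a k1 - apow a k2 + apow a k3 - apow a k - m) <= C0 /\
  (-N1 <= k1 <= N1)%Z /\ (-N2 <= k2 <= N2)%Z /\ (-N3 <= k3 <= N3)%Z.
Proof.
  unfold inS. rewrite !andb_true_iff, !negb_true_iff, !Z.eqb_eq, !Z.eqb_neq, !Z.leb_le.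
  destruct Rle_dec; [|intuition discriminate].
  intros [[[[[[[? ?] ?] _] ?] ?] ?] ?]. repeat split; auto; lia.
Qed.

Lemma cardS_le_fibres a m C0 N N1 N2 N3 NA NB NX (rebuild : Z * Z * Z -> Z * Z * Z * Z) :
  (forall q, inS a m C0 N N1 N2 N3 q = true -> In q (map rebuild (fibres a m C0 NA NB NX))) ->
  INR (cardS a m C0 N N1 N2 N3) <= INR (length (fibres a m C0 NA NB NX)).
Proof.
  intros Hcover. apply le_INR. rewrite <- (length_map rebuild).
  apply NoDup_incl_length; [apply NoDup_filter, NoDup_box|].
  intros q Hq. apply filter_In in Hq as [_ Hq]. auto.
Qed.

Lemma cardS_le_fibres_k3 a m C0 N N1 N2 N3 :
  INR (cardS a m C0 N N1 N2 N3) <= INR (length (fibres a m C0 N1 N2 N3)).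
Proof.
  apply (cardS_le_fibres _ _ _ _ _ _ _ _ _ _
           (fun '(k1, k2, k3) => ((k1 - k2 + k3)%Z, k1, k2, k3))).
  intros [[[k k1] k2] k3] Hq.
  destruct (inS_spec _ _ _ _ _ _ _ _ _ _ _ Hq) as (-> & H21 & H23 & Hres & H1 & H2 & H3).
  apply in_map_iff. exists (k1, k2, k3). split; [reflexivity|].
  apply In_fibres; auto. unfold resonant. destruct Rle_dec; auto.
Qed.

(* Fibres over (k3, k2): the roles of k1 and k3 in S are symmetric. *)
Lemma cardS_le_fibres_k1 a m C0 N N1 N2 N3 :
  INR (cardS a m C0 N N1 N2 N3) <= INR (length (fibres a m C0 N3 N2 N1)).
Proof.
  apply (cardS_le_fibres _ _ _ _ _ _ _ _ _ _
           (fun '(k3, k2, k1) => ((k1 - k2 + k3)%Z, k1, k2, k3))).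
  intros [[[k k1] k2] k3] Hq.
  destruct (inS_spec _ _ _ _ _ _ _ _ _ _ _ Hq) as (-> & H21 & H23 & Hres & H1 & H2 & H3).
  apply in_map_iff. exists (k3, k2, k1). split; [reflexivity|].
  apply In_fibres; auto. unfold resonant.
  replace (k3 - k2 + k1)%Z with (k1 - k2 + k3)%Z by ring.
  destruct Rle_dec as [|Hnot]; auto. exfalso. apply Hnot.
  replace (apow a k3 - apow a k2 + apow a k1) with (apow a k1 - apow a k2 + apow a k3)
    by ring. exact Hres.
Qed.

Lemma ln_le_compat x y : 0 < x -> x <= y -> ln x <= ln y.
Proof. intros Hx [Hxy|<-]; [apply Rlt_le, ln_increasing|]; lra. Qed.

Lemma harmonic_bound n : (1 <= n)%nat -> sumR (fun k => / INR k) (seq 1 n) <= 1 + ln (INR n).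
Proof.
  induction n as [|n IH]; intros Hn; [lia|].
  destruct (Nat.eq_dec n 0) as [->|Hn0]; [simpl; rewrite ln_1; lra|].
  assert (Hlast : sumR (fun k => / INR k) [(1 + n)%nat] = / (INR n + 1)).
  { cbn [sumR fold_right]. rewrite Rplus_0_r, <- S_INR. reflexivity. }
  rewrite seq_S, sumR_app, Hlast, S_INR.
  pose proof (IH ltac:(lia)) as IHn.
  assert (Hx : 1 <= INR n) by (apply (le_INR 1); lia).
  set (x := INR n) in *.
  (* ln (x + 1) - ln x >= 1 - x / (x + 1) = 1 / (x + 1), from ln t <= t - 1 *)
  assert (Hstep : ln (x / (x + 1)) <= x / (x + 1) - 1).
  { pose proof (exp_ineq1_le (ln (x / (x + 1)))).
    rewrite exp_ln in H by (apply Rdiv_lt_0_compat; lra). lra. }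
  unfold Rdiv in Hstep. rewrite ln_mult, ln_Rinv in Hstep by (try apply Rinv_0_lt_compat; lra).
  replace (x * / (x + 1) - 1) with (- / (x + 1)) in Hstep by (field; lra).
  lra.
Qed.

Lemma inv_abs_opp z : inv_abs (- z) = inv_abs z.
Proof.
  unfold inv_abs. destruct (Z.eq_dec (- z) 0), (Z.eq_dec z 0); try lia; auto.
  rewrite Z.abs_opp. reflexivity.
Qed.

Lemma sum_inv_abs_zrange R : (1 <= R)%Z -> sumR inv_abs (zrange R) <= 2 * (1 + ln (IZR R)).
Proof.
  intros HR. set (n := Z.to_nat R).
  set (pos := map Z.of_nat (seq 1 n)).
  assert (Hincl : incl (zrange R) (pos ++ map Z.opp pos ++ [0%Z])).
  { intros z Hz. apply In_zrange in Hz. apply in_or_app.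
    destruct (Z_lt_le_dec 0 z); [left | right; apply in_or_app].
    - apply in_map_iff. exists (Z.to_nat z). split; [lia|]. apply in_seq. unfold n. lia.
    - destruct (Z.eq_dec z 0) as [->|Hz0]; [right; left; reflexivity|left].
      apply in_map_iff. exists (- z)%Z. split; [ring|].
      apply in_map_iff. exists (Z.to_nat (- z)). split; [lia|]. apply in_seq. unfold n. lia. }
  pose proof (sumR_incl inv_abs _ _ (NoDup_zrange R) Hincl inv_abs_nonneg) as Hsum.
  assert (Hpos : sumR inv_abs pos = sumR (fun k => / INR k) (seq 1 n)).
  { unfold pos. rewrite sumR_map. apply Rle_antisym; apply sumR_le;
      intros k Hk; apply in_seq in Hk; unfold inv_abs; destruct Z.eq_dec; try lia;
      rewrite INR_IZR_INZ, Z.abs_eq by lia; lra. }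
  rewrite !sumR_app, sumR_map in Hsum.
  rewrite (sumR_ext (fun z => inv_abs (- z)) inv_abs) in Hsum by (intros; apply inv_abs_opp).
  assert (Hzero : sumR inv_abs [0%Z] = 0) by (cbn; lra).
  rewrite Hzero, Hpos in Hsum.
  pose proof (harmonic_bound n ltac:(unfold n; lia)) as Hharm.
  replace (INR n) with (IZR R) in Hharm by (unfold n; rewrite INR_IZR_INZ, Z2Nat.id by lia; auto).
  lra.
Qed.

Lemma sum_inv_abs_shift NA NB c : (1 <= NA)%Z -> (1 <= NB)%Z -> (-NA <= c <= NA)%Z ->
  sumR (fun B => inv_abs (c - B)) (zrange NB) <= 2 * (1 + ln (IZR (NA + NB))).
Proof.
  intros HA HB Hc. eapply Rle_trans; [|apply sum_inv_abs_zrange; lia].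
  rewrite <- (sumR_map inv_abs (fun B => (c - B)%Z)).
  apply sumR_incl; [| |apply inv_abs_nonneg].
  - apply NoDup_map_inj; [intros; lia | apply NoDup_zrange].
  - intros z Hz. apply in_map_iff in Hz as [B [<- HB']]. apply In_zrange in HB'.
    apply In_zrange. lia.
Qed.

(* Sum of 1/|A - B| over the grid: summing first over the longer side costs one
   logarithm per point of the shorter side. *)
Lemma sum_inv_abs_grid NA NB : (1 <= NA)%Z -> (1 <= NB)%Z ->
  sumR (fun A => sumR (fun B => inv_abs (A - B)) (zrange NB)) (zrange NA)
  <= Rmin (IZR (2 * NA + 1)) (IZR (2 * NB + 1)) * (2 * (1 + ln (IZR (NA + NB)))).
Proof.
  intros HA HB. set (L := 2 * (1 + ln (IZR (NA + NB)))).
  assert (Hrows : sumR (fun A => sumR (fun B => inv_abs (A - B)) (zrange NB)) (zrange NA)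
                  <= IZR (2 * NA + 1) * L).
  { rewrite <- length_zrange by lia. rewrite Rmult_comm, <- sumR_const.
    apply sumR_le. intros A HA'. apply In_zrange in HA'. apply sum_inv_abs_shift; auto. }
  assert (Hcols : sumR (fun A => sumR (fun B => inv_abs (A - B)) (zrange NB)) (zrange NA)
                  <= IZR (2 * NB + 1) * L).
  { rewrite (sumR_swap (fun A B => inv_abs (A - B))).
    rewrite <- length_zrange by lia. rewrite Rmult_comm, <- sumR_const.
    apply sumR_le. intros B HB'. apply In_zrange in HB'.
    unfold L. rewrite Z.add_comm.
    rewrite (sumR_ext _ (fun A => inv_abs (B - A))) by
      (intros A; rewrite <- inv_abs_opp; f_equal; ring).
    apply sum_inv_abs_shift; auto. }
  unfold Rmin. destruct Rle_dec; auto.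
Qed.

Lemma log_factor_bound x y : 1 <= x -> 1 <= y ->
  Rmin (2 * x + 1) (2 * y + 1) * (2 * (1 + ln (x + y)))
  <= 18 * (ln (2 + Rmax x y) * Rmin x y).
Proof.
  intros Hx Hy. set (Y := ln (2 + Rmax x y)).
  pose proof (Rmax_l x y). pose proof (Rmax_r x y).
  assert (HY1 : 1 <= Y).
  { unfold Y. rewrite <- (ln_exp 1). apply ln_le_compat; [apply exp_pos|].
    pose proof exp_le_3. lra. }
  assert (HY2 : ln (x + y) <= 2 * Y).
  { unfold Y. replace (2 * ln (2 + Rmax x y)) with (ln ((2 + Rmax x y) * (2 + Rmax x y)))
      by (rewrite ln_mult; lra).
    apply ln_le_compat; nra. }
  assert (Hln : 0 <= ln (x + y)) by (rewrite <- ln_1; apply ln_le_compat; lra).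
  assert (Hmin : Rmin (2 * x + 1) (2 * y + 1) <= 3 * Rmin x y)
    by (unfold Rmin; repeat destruct Rle_dec; lra).
  assert (Hmin0 : 0 <= Rmin (2 * x + 1) (2 * y + 1)) by (unfold Rmin; destruct Rle_dec; lra).
  apply Rle_trans with ((3 * Rmin x y) * (6 * Y)); [|lra].
  apply Rmult_le_compat; lra.
Qed.

Definition Cmain (a C0 : R) : R := 9 * K0 a C0 + 18 * K1 a C0.

Lemma fibres_total a m C0 NA NB NX : 1 < a < 2 -> 0 < C0 ->
  (1 <= NA)%Z -> (1 <= NB)%Z -> (1 <= NX)%Z ->
  INR (length (fibres a m C0 NA NB NX))
  <= Cmain a C0 * (Rpower (IZR NX) (2 - a) * ln (2 + Rmax (IZR NA) (IZR NB))
                   * Rmin (IZR NA) (IZR NB) + IZR NA * IZR NB).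
Proof.
  intros Ha HC HA HB HX. eapply Rle_trans; [apply fibres_length; auto|].
  set (P := Rpower (IZR NX) (2 - a)).
  pose proof (K0_nonneg a C0 (proj1 Ha) HC). pose proof (K1_nonneg a C0 (proj1 Ha) HC).
  pose proof (Rpower_pos (IZR NX) (2 - a)) as HP. fold P in HP.
  assert (Hsplit : sumR (fun A => sumR (fun B => K0 a C0 + K1 a C0 * P * inv_abs (A - B))
                     (zrange NB)) (zrange NA)
                   = K0 a C0 * (IZR (2 * NA + 1) * IZR (2 * NB + 1)) + K1 a C0 * P *
                     sumR (fun A => sumR (fun B => inv_abs (A - B)) (zrange NB)) (zrange NA)).
  { rewrite (sumR_ext _ (fun A => K0 a C0 * IZR (2 * NB + 1) +
                K1 a C0 * P * sumR (fun B => inv_abs (A - B)) (zrange NB)))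
      by (intros A; rewrite sumR_plus, sumR_const, sumR_scal, length_zrange by lia; ring).
    rewrite sumR_plus, sumR_const, sumR_scal, length_zrange by lia. ring. }
  rewrite Hsplit.
  pose proof (sum_inv_abs_grid NA NB HA HB) as Hgrid.
  assert (Hx : 1 <= IZR NA) by (apply IZR_le; lia).
  assert (Hy : 1 <= IZR NB) by (apply IZR_le; lia).
  pose proof (log_factor_bound (IZR NA) (IZR NB) Hx Hy) as Hlog.
  rewrite !plus_IZR, !mult_IZR in Hgrid |- *. rewrite (plus_IZR NA NB) in Hgrid.
  set (x := IZR NA) in *. set (y := IZR NB) in *.
  assert (Hsum : K1 a C0 * P * sumR (fun A => sumR (fun B => inv_abs (A - B)) (zrange NB))
                   (zrange NA) <= 18 * K1 a C0 * (P * ln (2 + Rmax x y) * Rmin x y)).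
  { apply Rle_trans with (K1 a C0 * P * (18 * (ln (2 + Rmax x y) * Rmin x y))); [|right; ring].
    apply Rmult_le_compat_l; [apply Rmult_le_pos; lra | lra]. }
  assert (Hgrid0 : (2 * x + 1) * (2 * y + 1) <= 9 * (x * y)) by nra.
  assert (Hlog0 : 0 <= P * ln (2 + Rmax x y) * Rmin x y).
  { pose proof (Rmax_l x y).
    assert (0 <= ln (2 + Rmax x y)) by (rewrite <- ln_1; apply ln_le_compat; lra).
    assert (1 <= Rmin x y) by (apply Rmin_glb; lra).
    apply Rmult_le_pos; [apply Rmult_le_pos|]; lra. }
  unfold Cmain. nra.
Qed.

Theorem lemma2p10 :
  forall (a C0 : R), 1 < a < 2 -> 0 < C0 ->
  exists C : R,
  forall (n n1 n2 n3 : nat) (m : R),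
    (n1 <= n)%nat -> (n2 <= n)%nat -> (n3 <= n)%nat ->
    let N1 := 2 ^ n1 in let N2 := 2 ^ n2 in let N3 := 2 ^ n3 in
    INR (cardS a m C0 (2 ^ Z.of_nat n) (2 ^ Z.of_nat n1)
                     (2 ^ Z.of_nat n2) (2 ^ Z.of_nat n3))%Z
    <= C * Rmin
         (Rpower N3 (2 - a) * ln (2 + Rmax N1 N2) * Rmin N1 N2 + N1 * N2)
         (Rpower N1 (2 - a) * ln (2 + Rmax N2 N3) * Rmin N2 N3 + N2 * N3).
Proof.
  intros a C0 Ha HC. exists (Cmain a C0).
  intros n n1 n2 n3 m _ _ _ N1 N2 N3.
  assert (Hdyadic : forall k, (1 <= 2 ^ Z.of_nat k)%Z /\ 2 ^ k = IZR (2 ^ Z.of_nat k)).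
  { intros k. split; [|apply pow_IZR].
    pose proof (Z.pow_pos_nonneg 2 (Z.of_nat k) ltac:(lia) ltac:(lia)). lia. }
  destruct (Hdyadic n1) as [H1 E1], (Hdyadic n2) as [H2 E2], (Hdyadic n3) as [H3 E3].
  unfold N1, N2, N3. rewrite E1, E2, E3.
  pose proof (Rle_trans _ _ _ (cardS_le_fibres_k3 a m C0 (2 ^ Z.of_nat n) _ _ _)
                (fibres_total a m C0 _ _ _ Ha HC H1 H2 H3)) as Hk3.
  pose proof (Rle_trans _ _ _ (cardS_le_fibres_k1 a m C0 (2 ^ Z.of_nat n) _ _ _)
                (fibres_total a m C0 _ _ _ Ha HC H3 H2 H1)) as Hk1.
  rewrite Rmax_comm, Rmin_comm, (Rmult_comm (IZR _) (IZR (2 ^ Z.of_nat n2))) in Hk1.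
  unfold Rmin at 1. destruct Rle_dec; assumption.
Qed.
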